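(* Assume the standing assumptions (A), a quadrature rule and grid as below, and let $\rho_0:\mathbb{R}\to[0,\rho_{\max}]$ be such that the initial cell averages are $\bar\rho_j(0)=\sum_{\nu=1}^R\gamma_\nu\rho_0(x_{j-1/2}+hy_\nu)$; set $\rho_m=\inf_{\mathbb{R}}\rho_0$, $\rho_M=\sup_{\mathbb{R}}\rho_0$. Suppose the reconstruction used at every stage has the property (R) below, and let the semi-discrete operator $L$ be defined by $L(\bar\rho)_j=-\frac1h\big(V_{j+1/2}g(\rho^-_{j+1/2})-V_{j-1/2}g(\rho^-_{j-1/2})\big)$ with $V_{j+1/2}$, $\rho^-_{j+1/2}$ computed from that reconstruction. Let the time integration be an SSP method (in the sense below) with SSP constant $c_{SSP}>0$ and time step $\tau$ satisfying $$\tau\le c_{SSP}\,\frac{\gamma_R h}{\gamma_R h\,w_\eta(0)\|v'\|\|g\|+\|v\|\|g'\|}.$$ Then the fully discrete approximate cell averages satisfy $\rho_m\le\bar\rho_j(t^n)\le\rho_M$ for all $j\in\mathbb{Z}$ and all $t^n=n\tau$, $n\in\mathbb{N}$.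
   Context: Standing assumptions (A): $\rho_{\max}>0$, $\eta>0$; $g\in C^1([0,\rho_{\max}];\mathbb{R}_{\ge0})$ with $g'\ge0$; $v\in C^1([0,\rho_{\max}];\mathbb{R}_{\ge0})$ with $v'\le0$; $w_\eta\in C^1([0,\eta];\mathbb{R}_{\ge0})$ with $w_\eta'\le0$ and $\int_0^\eta w_\eta=1$. Norms $\|\cdot\|$ are sup norms on $[0,\rho_{\max}]$. Grid: $h>0$, $x_j=x_0+jh$, $I_j=[x_{j-1/2},x_{j+1/2}]$, $N\in\mathbb{N}$ with $Nh=\eta$. Quadrature: nodes $y_1,\dots,y_R\in[0,1]$ with $y_R=1$, weights $\gamma_\nu>0$, $\sum\gamma_\nu=1$; $w_\eta^{\nu,k}=w_\eta((k+y_\nu)h)$ with $h\sum_{k=0}^{N-1}\sum_\nu\gamma_\nu w_\eta^{\nu,k}=1$. Property (R): whenever all cell averages $\bar\rho_l$ lie in $[\rho_m,\rho_M]$, the reconstruction provides for each $l$ a polynomial $P_l$ on $I_l$ with $\frac1h\int_{I_l}P_l=\bar\rho_l$, for which the quadrature rule is exact, and whose values $\rho_l^\nu=P_l(x_{l-1/2}+y_\nu h)$ lie in $[\rho_m,\rho_M]$ (in the paper this is achieved by applying the Zhang–Shu linear scaling limiter $\tilde P_l=\bar\rho_l+\theta(P_l-\bar\rho_l)$ to CWENO reconstructions). Then $\rho^-_{j+1/2}=P_j(x_{j+1/2})=\rho_j^R$ and $V_{j+1/2}=v\big(h\sum_{k=0}^{N-1}\sum_\nu\gamma_\nu w_\eta^{\nu,k}\rho^\nu_{j+k+1}\big)$.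 SSP method with constant $c_{SSP}$: an explicit (multistage and/or multistep) method in which every new stage or step value is a convex combination of terms of the form $u+\tau\beta L(u)$, where $u$ is a previously computed stage/step value and $0\le\beta\le 1/c_{SSP}$ (equivalently, it is a convex combination of forward Euler steps with step sizes at most $\tau/c_{SSP}$). *)

From Stdlib Require Import Reals Lra List.
Open Scope R_scope.

Fixpoint sumR (n : nat) (f : nat -> R) : R :=
  match n with
  | O => 0
  | S k => sumR k f + f k
  end.

Fixpoint peval (p : list R) (x : R) : R :=
  match p with
  | nil => 0
  | a :: q => a + x * peval q x
  end.

(* f is C^1 on [a,b] with derivative f' (one-sided derivatives at the
   endpoints, derivative continuous on [a,b]) *)
Definition C1_on (f f' : R -> R) (a b : R) : Prop :=
  (forall x, a <= x <= b ->
     limit1_in (fun y => (f y - f x) / (y - x))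
               (fun y => a <= y <= b /\ y <> x) (f' x) x) /\
  (forall x, a <= x <= b ->
     limit1_in f' (fun y => a <= y <= b) (f' x) x).

Definition is_supnorm (f : R -> R) (a b n : R) : Prop :=
  is_lub (fun z => exists x, a <= x <= b /\ z = Rabs (f x)) n.

Definition is_glb (E : R -> Prop) (m : R) : Prop :=
  (forall x, E x -> m <= x) /\ (forall c, (forall x, E x -> c <= x) -> c <= m).

(* cell interfaces: x_{j-1/2} = x0 + (j - 1/2) h *)
Definition xl (x0 h : R) (j : Z) : R := x0 + (IZR j - / 2) * h.

(* A reconstruction maps a sequence of cell averages to, for each cell l,
   the coefficient list of a polynomial P_l on I_l. *)
Definition recon := (Z -> R) -> Z -> list R.

Definition rho_nu (rec : recon) (x0 h : R) (y : nat -> R)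
  (u : Z -> R) (l : Z) (nu : nat) : R :=
  peval (rec u l) (xl x0 h l + y nu * h).

Definition rho_minus (rec : recon) (x0 h : R) (u : Z -> R) (j : Z) : R :=
  peval (rec u j) (xl x0 h (j + 1)).

Definition Vhalf (rec : recon) (x0 h : R) (N Rq : nat) (y gam : nat -> R)
  (w v : R -> R) (u : Z -> R) (j : Z) : R :=
  v (h * sumR N (fun k => sumR Rq (fun nu =>
        gam nu * w ((INR k + y nu) * h) *
        rho_nu rec x0 h y u (j + Z.of_nat k + 1)%Z nu))).

Definition Lop (rec : recon) (x0 h : R) (N Rq : nat) (y gam : nat -> R)
  (w v g : R -> R) (u : Z -> R) (j : Z) : R :=
  - (1 / h) * (Vhalf rec x0 h N Rq y gam w v u j * g (rho_minus rec x0 h u j)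
              - Vhalf rec x0 h N Rq y gam w v u (j - 1) * g (rho_minus rec x0 h u (j - 1))).

Definition property_R (rec : recon) (x0 h : R) (Rq : nat) (y gam : nat -> R)
  (rm rM : R) : Prop :=
  forall u : Z -> R, (forall l, rm <= u l <= rM) ->
  forall l : Z,
    (exists pr : Riemann_integrable (peval (rec u l)) (xl x0 h l) (xl x0 h (l + 1)),
        RiemannInt pr / h = u l /\
        sumR Rq (fun nu => gam nu * peval (rec u l) (xl x0 h l + y nu * h))
          = RiemannInt pr / h) /\
    (forall nu, (nu < Rq)%nat -> rm <= rho_nu rec x0 h y u l nu <= rM).

(* SSP time integration: the whole computation history U 0, U 1, U 2, ...
   (all stage and step values, in computation order, U 0 = initial averages);
   every new value is a convex combination of forward Euler steps
   U i + tau * beta * L(U i) of previously computed values, 0 <= beta <= 1/c. *)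
Definition SSP_history (L : (Z -> R) -> Z -> R) (c tau : R)
  (U : nat -> Z -> R) : Prop :=
  forall m : nat, (1 <= m)%nat ->
    exists (K : nat) (idx : nat -> nat) (alpha beta : nat -> R),
      (forall k, (k < K)%nat ->
          (idx k < m)%nat /\ 0 <= alpha k /\ 0 <= beta k <= 1 / c) /\
      sumR K alpha = 1 /\
      (forall j : Z,
         U m j = sumR K (fun k =>
                   alpha k * (U (idx k) j + tau * beta k * L (U (idx k)) j))).

(* An SSP step is a convex combination of forward Euler steps of length at most
   [tau / c_SSP], so it suffices that one such Euler step maps averages in
   [[rho_m, rho_M]] into [[rho_m, rho_M]].  For the upper bound, split the flux
   difference as
     V_{j-1/2} (g(rho^-_{j-1/2}) - g(rho^-_{j+1/2})) + (V_{j-1/2} - V_{j+1/2}) g(rho^-_{j+1/2}).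
   Since [rho^-_{j+1/2}] is the last quadrature node, of weight [gamma_R],
   [gamma_R (rho_M - rho^-_{j+1/2}) <= rho_M - rho_j], which controls the first term
   by monotonicity of [g]; summation by parts against the nonincreasing kernel [w_eta]
   shows that the convolution increases across a cell by at most
   [h w_eta(0) (rho_M - rho_j)], which controls the second term by monotonicity of [v].
   Both terms are thus proportional to [rho_M - rho_j], and the CFL condition makes
   the step fit.  The lower bound is symmetric. *)

From Stdlib Require Import Reals Lra Lia ZArith FunctionalExtensionality.
From Coquelicot Require Import Coquelicot.
Open Scope R_scope.

(* Freezing [f] outside [[a, b]] makes it continuous on all of [R], so the two-sided
   mean value theorem applies up to the endpoints, where [C1_on] only provides
   one-sided derivatives. *)
Definition clamp (a b z : R) : R := Rmax a (Rmin b z).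

Lemma clamp_id a b z : a <= z <= b -> clamp a b z = z.
Proof. intros Hz; unfold clamp; rewrite Rmin_right, Rmax_right; lra. Qed.

Lemma clamp_range a b z : a <= b -> a <= clamp a b z <= b.
Proof. intros Hab; unfold clamp, Rmax, Rmin; repeat destruct Rle_dec; lra. Qed.

Lemma clamp_dist_le a b z z0 : a <= z0 <= b -> Rabs (clamp a b z - z0) <= Rabs (z - z0).
Proof.
  intros Hz0; unfold clamp, Rmax, Rmin, Rabs.
  repeat destruct Rle_dec; repeat destruct Rcase_abs; lra.
Qed.

Lemma C1_on_local_lipschitz f f' a b z0 : C1_on f f' a b -> a <= z0 <= b ->
  exists d K, 0 < d /\ 0 < K /\
    forall z, a <= z <= b -> Rabs (z - z0) < d -> Rabs (f z - f z0) <= K * Rabs (z - z0).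
Proof.
  intros [Hd _] Hz0. destruct (Hd z0 Hz0 1 Rlt_0_1) as [d [Hd0 Hq]].
  exists d, (Rabs (f' z0) + 1). split; [lra|]. split; [pose proof (Rabs_pos (f' z0)); lra|].
  intros z Hz Hzd. destruct (Req_dec z z0) as [->|Hne].
  { rewrite !Rminus_diag, Rabs_R0. lra. }
  specialize (Hq z (conj (conj Hz Hne) Hzd)); simpl in Hq; unfold Rdist in Hq.
  replace (f z - f z0) with ((f z - f z0) / (z - z0) * (z - z0)) by (field; lra).
  rewrite Rabs_mult. apply Rmult_le_compat_r; [apply Rabs_pos|].
  pose proof (Rabs_triang_inv ((f z - f z0) / (z - z0)) (f' z0)). lra.
Qed.

Lemma clamped_continuous f f' a b z0 : C1_on f f' a b -> a <= z0 <= b ->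
  continuity_pt (fun z => f (clamp a b z)) z0.
Proof.
  intros Hf Hz0. destruct (C1_on_local_lipschitz f f' a b z0 Hf Hz0) as [d [K [Hd [HK Hl]]]].
  intros eps Heps. exists (Rmin d (eps / K)).
  split; [apply Rmin_pos; [lra | apply Rdiv_lt_0_compat; lra]|].
  intros z [_ Hz]; simpl in *; unfold Rdist in *. rewrite (clamp_id a b z0) by lra.
  pose proof (clamp_dist_le a b z z0 Hz0). pose proof (Rmin_l d (eps / K)).
  pose proof (Rmin_r d (eps / K)).
  assert (Hclose : Rabs (clamp a b z - z0) < eps / K) by lra.
  apply Rle_lt_trans with (K * Rabs (clamp a b z - z0)).
  - apply Hl; [apply clamp_range|]; lra.
  - apply (Rmult_lt_compat_l K) in Hclose; [|lra].
    replace (K * (eps / K)) with eps in Hclose by (field; lra). lra.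
Qed.

Lemma clamped_derivative f f' a b c : C1_on f f' a b -> a < c < b ->
  derivable_pt_lim (fun z => f (clamp a b z)) c (f' c).
Proof.
  intros [Hd _] Hc eps Heps. destruct (Hd c ltac:(lra) eps Heps) as [d [Hd0 Hq]].
  assert (Hpos : 0 < Rmin d (Rmin (c - a) (b - c))) by (repeat apply Rmin_pos; lra).
  exists (mkposreal _ Hpos); simpl. intros t Ht0 Ht.
  pose proof (Rmin_l d (Rmin (c - a) (b - c))). pose proof (Rmin_r d (Rmin (c - a) (b - c))).
  pose proof (Rmin_l (c - a) (b - c)). pose proof (Rmin_r (c - a) (b - c)).
  apply Rabs_def2 in Ht as [Ht1 Ht2].
  rewrite !clamp_id by lra.
  specialize (Hq (c + t)); simpl in Hq; unfold Rdist in Hq.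
  replace (c + t - c) with t in Hq by ring. apply Hq.
  split; [split; [lra | intros E; apply Ht0; lra] | apply Rabs_def1; lra].
Qed.

Lemma C1_on_mean_value f f' a b x y : C1_on f f' a b -> a <= x -> x <= y -> y <= b ->
  exists c, x <= c <= y /\ f y - f x = f' c * (y - x).
Proof.
  intros Hf Hx Hxy Hy.
  destruct (MVT_gen (fun z => f (clamp a b z)) x y f') as [c [Hc E]]; cbv zeta in *;
    rewrite ?Rmin_left, ?Rmax_right in * by lra.
  - intros c Hc. apply is_derive_Reals, (clamped_derivative f f' a b); auto; lra.
  - intros c Hc. apply (clamped_continuous f f'); auto; lra.
  - exists c. split; [lra|]. rewrite <- E, !clamp_id; lra.
Qed.

Lemma C1_on_opp f f' a b : C1_on f f' a b -> C1_on (fun z => - f z) (fun z => - f' z) a b.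
Proof.
  intros [Hd Hc]; split; intros x Hx.
  - replace (fun z => (- f z - - f x) / (z - x)) with (fun z => - ((f z - f x) / (z - x)))
      by (extensionality z; unfold Rdiv; ring).
    apply limit_Ropp, Hd, Hx.
  - apply limit_Ropp, Hc, Hx.
Qed.

Lemma C1_on_increment_le f f' a b M x y : C1_on f f' a b ->
  (forall z, a <= z <= b -> f' z <= M) -> a <= x -> x <= y -> y <= b ->
  f y - f x <= M * (y - x).
Proof.
  intros Hf HM Hx Hxy Hy. destruct (C1_on_mean_value f f' a b x y) as [c [Hc ->]]; auto.
  apply Rmult_le_compat_r; [lra | apply HM; lra].
Qed.

Lemma C1_on_monotone_increment_le f f' a b L x y d : C1_on f f' a b ->
  (forall z, a <= z <= b -> 0 <= f' z <= L) -> a <= x <= b -> a <= y <= b ->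
  0 <= d -> y - x <= d -> f y - f x <= L * d.
Proof.
  intros Hf HL Hx Hy Hd Hyx. assert (HL0 : 0 <= L) by (specialize (HL x Hx); lra).
  destruct (Rle_dec x y) as [Hxy | Hyx'].
  - pose proof (C1_on_increment_le f f' a b L x y Hf ltac:(intros z Hz; apply HL, Hz)).
    nra.
  - pose proof (C1_on_increment_le _ _ a b 0 y x (C1_on_opp f f' a b Hf)
      ltac:(intros z Hz; specialize (HL z Hz); lra)). nra.
Qed.

Lemma C1_on_antitone_decrement_le f f' a b L x y d : C1_on f f' a b ->
  (forall z, a <= z <= b -> - L <= f' z <= 0) -> a <= x <= b -> a <= y <= b ->
  0 <= d -> y - x <= d -> f x - f y <= L * d.
Proof.
  intros Hf HL Hx Hy Hd Hyx. replace (f x - f y) with (- f y - - f x) by ring.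
  apply (C1_on_monotone_increment_le _ _ a b L x y d (C1_on_opp f f' a b Hf)); auto.
  intros z Hz. specialize (HL z Hz). lra.
Qed.

Lemma sumR_ext n f g : (forall k, (k < n)%nat -> f k = g k) -> sumR n f = sumR n g.
Proof.
  induction n as [|n IH]; intros H; simpl; auto.
  rewrite IH by (intros; apply H; lia). rewrite H by lia. reflexivity.
Qed.

Lemma sumR_plus n f g : sumR n (fun k => f k + g k) = sumR n f + sumR n g.
Proof. induction n as [|n IH]; simpl; [ring | rewrite IH; ring]. Qed.

Lemma sumR_minus n f g : sumR n (fun k => f k - g k) = sumR n f - sumR n g.
Proof. induction n as [|n IH]; simpl; [ring | rewrite IH; ring]. Qed.

Lemma sumR_scal n c f : sumR n (fun k => c * f k) = c * sumR n f.
Proof. induction n as [|n IH]; simpl; [ring | rewrite IH; ring]. Qed.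

Lemma sumR_le n f g : (forall k, (k < n)%nat -> f k <= g k) -> sumR n f <= sumR n g.
Proof.
  induction n as [|n IH]; intros H; simpl; [lra|].
  pose proof (H n ltac:(lia)). pose proof (IH ltac:(intros; apply H; lia)). lra.
Qed.

Lemma sumR_swap n m F :
  sumR n (fun k => sumR m (F k)) = sumR m (fun l => sumR n (fun k => F k l)).
Proof.
  induction n as [|n IH]; simpl.
  - induction m as [|m IHm]; simpl; [auto | rewrite <- IHm; ring].
  - rewrite IH, <- sumR_plus. auto.
Qed.

Lemma term_le_sumR n f i : (forall k, (k < n)%nat -> 0 <= f k) -> (i < n)%nat ->
  f i <= sumR n f.
Proof.
  induction n as [|n IH]; intros H Hi; simpl; [lia|].
  assert (Hpos : 0 <= sumR n f).
  { rewrite <- (Rmult_0_l (sumR n (fun _ => 1))), <- sumR_scal.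
    apply sumR_le; intros k Hk; rewrite Rmult_0_l; apply H; lia. }
  destruct (Nat.eq_dec i n) as [->|Hne]; [lra|].
  pose proof (IH ltac:(intros; apply H; lia) ltac:(lia)). pose proof (H n ltac:(lia)). lra.
Qed.

Lemma sumR_convex_bounds n a f lo hi :
  (forall k, (k < n)%nat -> 0 <= a k /\ lo <= f k <= hi) -> sumR n a = 1 ->
  lo <= sumR n (fun k => a k * f k) <= hi.
Proof.
  intros H Ha.
  assert (Hconst : forall c, sumR n (fun k => a k * c) = c).
  { intros c. rewrite (sumR_ext n _ (fun k => c * a k)) by (intros; ring).
    rewrite sumR_scal, Ha; ring. }
  split; [rewrite <- (Hconst lo) | rewrite <- (Hconst hi)];
    apply sumR_le; intros k Hk; destruct (H k Hk); nra.
Qed.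

(* Summation by parts for nonincreasing [c]; carrying the boundary term
   [c n * (M - f (S n))] is what makes the induction go through. *)
Lemma abel_sum_le (c f : nat -> R) M n :
  (forall k, (k < n)%nat -> c (S k) <= c k) -> (forall k, (k <= S n)%nat -> f k <= M) ->
  sumR (S n) (fun k => c k * (f (S k) - f k)) + c n * (M - f (S n)) <= c O * (M - f O).
Proof.
  induction n as [|n IH]; intros Hc Hf; simpl in *; [lra|].
  pose proof (IH ltac:(intros; apply Hc; lia) ltac:(intros; apply Hf; lia)).
  pose proof (Hc n ltac:(lia)). pose proof (Hf (S n) ltac:(lia)). nra.
Qed.

Lemma flux_difference_le (s h gR w0 nv ng nv' ng' D E Va Vb ga gb : R) :
  0 < gR -> 0 < h -> 0 <= s -> 0 <= w0 -> 0 <= nv' -> 0 <= ng' ->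
  0 <= Va <= nv -> 0 <= gb <= ng ->
  0 <= E -> gR * E <= D -> ga - gb <= ng' * E -> Va - Vb <= nv' * (h * w0 * D) ->
  s * (gR * h * w0 * nv' * ng + nv * ng') <= gR * h ->
  s * (Va * ga - Vb * gb) <= h * D.
Proof.
  intros HgR Hh Hs Hw0 Hnv' Hng' HVa Hgb HE HED Hg HV HCFL.
  assert (HD : 0 <= D) by nra.
  assert (HX : 0 <= nv' * (h * w0 * D)) by (repeat apply Rmult_le_pos; lra).
  assert (Hgdiff : Va * (ga - gb) <= nv * (ng' * E)).
  { apply Rle_trans with (Va * (ng' * E)); [apply Rmult_le_compat_l | apply Rmult_le_compat_r];
      try lra. apply Rmult_le_pos; lra. }
  assert (HVdiff : (Va - Vb) * gb <= nv' * (h * w0 * D) * ng).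
  { apply Rle_trans with (nv' * (h * w0 * D) * gb); [apply Rmult_le_compat_r | apply Rmult_le_compat_l];
      lra. }
  assert (Hflux : gR * (Va * ga - Vb * gb) <= D * (gR * h * w0 * nv' * ng + nv * ng')).
  { assert (Hnvng : 0 <= nv * ng') by (apply Rmult_le_pos; lra).
    assert (gR * (nv * (ng' * E)) <= nv * ng' * D) by nra.
    replace (Va * ga - Vb * gb) with (Va * (ga - gb) + (Va - Vb) * gb) by ring.
    nra. }
  apply (Rmult_le_reg_l gR); [lra|].
  apply Rle_trans with (s * (D * (gR * h * w0 * nv' * ng + nv * ng'))); [nra|].
  nra.
Qed.

Lemma euler_update_bounds u s h X lo hi : 0 < h ->
  s * X <= h * (u - lo) -> - (s * X) <= h * (hi - u) ->
  lo <= u + s * (- (1 / h) * X) <= hi.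
Proof.
  intros Hh Hlo Hhi.
  replace (u + s * (- (1 / h) * X)) with (u - s * X / h) by (field; lra).
  split; [cut (s * X / h <= u - lo) | cut (- (s * X / h) <= hi - u)]; try lra;
    [apply Rle_div_l | unfold Rdiv; rewrite Ropp_mult_distr_l; apply Rle_div_l]; lra.
Qed.

Section ForwardEuler.

Variables (rec : recon) (x0 h : R) (N Rq : nat) (y gam : nat -> R) (w v g : R -> R).
Variables (rho_max rho_m rho_M ng ng' nv nv' : R).

Hypothesis Hh : 0 < h.
Hypothesis HRq : (1 <= Rq)%nat.
Hypothesis Hy : forall nu, (nu < Rq)%nat -> 0 <= y nu <= 1.
Hypothesis HyR : y (Rq - 1)%nat = 1.
Hypothesis Hgam : forall nu, (nu < Rq)%nat -> 0 < gam nu.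
Hypothesis Hgam1 : sumR Rq gam = 1.
Hypothesis Hw_nonneg : forall s, 0 <= s <= INR N * h -> 0 <= w s.
Hypothesis Hw_antitone : forall s1 s2, 0 <= s1 -> s1 <= s2 -> s2 <= INR N * h -> w s2 <= w s1.
Hypothesis Hwnorm :
  h * sumR N (fun k => sumR Rq (fun nu => gam nu * w ((INR k + y nu) * h))) = 1.

Lemma quadrature_sub_l c f :
  sumR Rq (fun nu => gam nu * (c - f nu)) = c - sumR Rq (fun nu => gam nu * f nu).
Proof.
  rewrite (sumR_ext _ _ (fun nu => c * gam nu - gam nu * f nu)) by (intros; ring).
  rewrite sumR_minus, sumR_scal, Hgam1. ring.
Qed.

Lemma quadrature_sub_r c f :
  sumR Rq (fun nu => gam nu * (f nu - c)) = sumR Rq (fun nu => gam nu * f nu) - c.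
Proof.
  rewrite (sumR_ext _ _ (fun nu => gam nu * f nu - c * gam nu)) by (intros; ring).
  rewrite sumR_minus, sumR_scal, Hgam1. ring.
Qed.

Lemma quadrature_term_le f i : (forall nu, (nu < Rq)%nat -> 0 <= f nu) -> (i < Rq)%nat ->
  gam i * f i <= sumR Rq (fun nu => gam nu * f nu).
Proof.
  intros Hf Hi. apply (term_le_sumR Rq (fun nu => gam nu * f nu)); auto.
  intros nu Hnu. pose proof (Hgam nu Hnu). pose proof (Hf nu Hnu). nra.
Qed.

Let W k nu := w ((INR k + y nu) * h).

Lemma N_pos : (1 <= N)%nat.
Proof. destruct N; [simpl in Hwnorm; lra | lia]. Qed.

Lemma weight_nonneg k nu : (k < N)%nat -> (nu < Rq)%nat -> 0 <= W k nu.
Proof.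
  intros Hk Hnu. apply Hw_nonneg. pose proof (Hy nu Hnu). pose proof (pos_INR k).
  assert (INR (S k) <= INR N) by (apply le_INR; lia). rewrite S_INR in *. split; nra.
Qed.

Lemma weight_antitone k nu : (S k < N)%nat -> (nu < Rq)%nat -> W (S k) nu <= W k nu.
Proof.
  intros Hk Hnu. apply Hw_antitone; pose proof (Hy nu Hnu); pose proof (pos_INR k);
  assert (INR (S (S k)) <= INR N) by (apply le_INR; lia); rewrite !S_INR in *; nra.
Qed.

Lemma weight_le_w0 nu : (nu < Rq)%nat -> W O nu <= w 0.
Proof.
  intros Hnu. pose proof N_pos. pose proof (Hy nu Hnu).
  assert (INR 1 <= INR N) by (apply le_INR; lia). unfold W; simpl INR in *.
  apply Hw_antitone; nra.
Qed.

(* The argument of [v] in [V_{l+1/2}]: quadrature of the convolution [w_eta * rho] from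
   the point values [f l nu = rho_l^nu]. *)
Definition conv (f : Z -> nat -> R) (l : Z) : R :=
  h * sumR N (fun k => sumR Rq (fun nu => gam nu * W k nu * f (l + Z.of_nat k + 1)%Z nu)).

Lemma conv_const c l : conv (fun _ _ => c) l = c.
Proof.
  unfold conv. rewrite (sumR_ext N _ (fun k => c * sumR Rq (fun nu => gam nu * W k nu))).
  - rewrite sumR_scal, <- Rmult_assoc, (Rmult_comm h), Rmult_assoc.
    unfold W. rewrite Hwnorm. ring.
  - intros k Hk. rewrite <- sumR_scal. apply sumR_ext. intros; ring.
Qed.

Lemma conv_le f1 f2 l : (forall l nu, (nu < Rq)%nat -> f1 l nu <= f2 l nu) ->
  conv f1 l <= conv f2 l.
Proof.
  intros Hf. apply Rmult_le_compat_l; [lra|].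
  apply sumR_le; intros k Hk; apply sumR_le; intros nu Hnu.
  pose proof (Hgam nu Hnu). pose proof (weight_nonneg k nu Hk Hnu).
  pose proof (Hf (l + Z.of_nat k + 1)%Z nu Hnu).
  apply Rmult_le_compat_l; [nra | auto].
Qed.

Lemma conv_bounds f lo hi l : (forall l nu, (nu < Rq)%nat -> lo <= f l nu <= hi) ->
  lo <= conv f l <= hi.
Proof.
  intros Hf. rewrite <- (conv_const lo l) at 1. rewrite <- (conv_const hi l).
  split; apply conv_le; intros l' nu Hnu; apply Hf, Hnu.
Qed.

Lemma conv_opp f l : conv (fun l nu => - f l nu) l = - conv f l.
Proof.
  unfold conv.
  rewrite (sumR_ext N _ (fun k => -1 * sumR Rq (fun nu =>
    gam nu * W k nu * f (l + Z.of_nat k + 1)%Z nu))), sumR_scal; [ring|].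
  intros k Hk. rewrite <- sumR_scal. apply sumR_ext. intros; ring.
Qed.

Lemma weighted_increments_le nu F M : (nu < Rq)%nat -> (forall k, (k <= N)%nat -> F k <= M) ->
  sumR N (fun k => W k nu * (F (S k) - F k)) <= w 0 * (M - F O).
Proof.
  intros Hnu HF. pose proof N_pos.
  pose proof (abel_sum_le (fun k => W k nu) F M (N - 1)) as Habel.
  replace (S (N - 1)) with N in Habel by lia.
  specialize (Habel ltac:(intros; apply weight_antitone; auto; lia) HF).
  pose proof (weight_nonneg (N - 1) nu ltac:(lia) Hnu). pose proof (weight_le_w0 nu Hnu).
  pose proof (HF N ltac:(lia)). pose proof (HF O ltac:(lia)). nra.
Qed.

Lemma conv_increment_le f M j : (forall l nu, (nu < Rq)%nat -> f l nu <= M) ->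
  conv f j - conv f (j - 1) <= h * w 0 * sumR Rq (fun nu => gam nu * (M - f j nu)).
Proof.
  intros Hf. set (F := fun nu k => f (j + Z.of_nat k)%Z nu).
  assert (Hdiff : conv f j - conv f (j - 1)
    = h * sumR Rq (fun nu => gam nu * sumR N (fun k => W k nu * (F nu (S k) - F nu k)))).
  { unfold conv. rewrite <- Rmult_minus_distr_l, <- sumR_minus. f_equal.
    rewrite (sumR_ext N _ (fun k =>
      sumR Rq (fun nu => gam nu * (W k nu * (F nu (S k) - F nu k))))).
    - rewrite sumR_swap. apply sumR_ext; intros nu _. apply sumR_scal.
    - intros k Hk. rewrite <- sumR_minus. apply sumR_ext; intros nu Hnu.
      unfold F. rewrite Nat2Z.inj_succ.
      replace (j + Z.of_nat k + 1)%Z with (j + Z.succ (Z.of_nat k))%Z by lia.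
      replace (j - 1 + Z.of_nat k + 1)%Z with (j + Z.of_nat k)%Z by lia. ring. }
  rewrite Hdiff, Rmult_assoc. apply Rmult_le_compat_l; [lra|].
  rewrite <- sumR_scal. apply sumR_le; intros nu Hnu.
  pose proof (weighted_increments_le nu (F nu) M Hnu ltac:(intros; apply Hf, Hnu)).
  unfold F in *; rewrite Z.add_0_r in *. pose proof (Hgam nu Hnu). nra.
Qed.

Lemma conv_decrement_le f m j : (forall l nu, (nu < Rq)%nat -> m <= f l nu) ->
  conv f (j - 1) - conv f j <= h * w 0 * sumR Rq (fun nu => gam nu * (f j nu - m)).
Proof.
  intros Hf.
  pose proof (conv_increment_le (fun l nu => - f l nu) (- m) j) as Hinc.
  rewrite !conv_opp in Hinc.
  rewrite (sumR_ext Rq _ (fun nu => gam nu * (f j nu - m))) in Hinc by (intros; ring).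
  specialize (Hinc ltac:(intros l nu Hnu; specialize (Hf l nu Hnu); lra)). lra.
Qed.

Hypothesis Hrho_m : 0 <= rho_m.
Hypothesis Hrho_M : rho_M <= rho_max.
Hypothesis HR : property_R rec x0 h Rq y gam rho_m rho_M.
Hypothesis Hg_range : forall r, 0 <= r <= rho_max -> 0 <= g r <= ng.
Hypothesis Hg_increment : forall a b d, 0 <= a <= rho_max -> 0 <= b <= rho_max ->
  0 <= d -> b - a <= d -> g b - g a <= ng' * d.
Hypothesis Hv_range : forall r, 0 <= r <= rho_max -> 0 <= v r <= nv.
Hypothesis Hv_decrement : forall a b d, 0 <= a <= rho_max -> 0 <= b <= rho_max ->
  0 <= d -> b - a <= d -> v a - v b <= nv' * d.
Hypothesis Hng' : 0 <= ng'.
Hypothesis Hnv' : 0 <= nv'.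

Section CellAverages.

Variable u : Z -> R.
Hypothesis Hu : forall l, rho_m <= u l <= rho_M.

Let rho := rho_nu rec x0 h y u.

Lemma point_value_bounds l nu : (nu < Rq)%nat -> rho_m <= rho l nu <= rho_M.
Proof. apply (proj2 (HR u Hu l)). Qed.

Lemma point_value_average l : sumR Rq (fun nu => gam nu * rho l nu) = u l.
Proof.
  destruct (proj1 (HR u Hu l)) as [pr [Hmean Hquad]].
  unfold rho, rho_nu. rewrite Hquad, Hmean. reflexivity.
Qed.

Lemma rho_minus_last_node l : rho_minus rec x0 h u l = rho l (Rq - 1)%nat.
Proof.
  unfold rho_minus, rho, rho_nu, xl. rewrite HyR, plus_IZR. f_equal. simpl. ring.
Qed.

Lemma rho_minus_bounds l : rho_m <= rho_minus rec x0 h u l <= rho_M.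
Proof. rewrite rho_minus_last_node. apply point_value_bounds. lia. Qed.

Lemma rho_minus_gap_upper l :
  gam (Rq - 1)%nat * (rho_M - rho_minus rec x0 h u l) <= rho_M - u l.
Proof.
  rewrite rho_minus_last_node, <- point_value_average, <- quadrature_sub_l.
  apply (quadrature_term_le (fun nu => rho_M - rho l nu)); [|lia].
  intros nu Hnu. pose proof (point_value_bounds l nu Hnu). lra.
Qed.

Lemma rho_minus_gap_lower l :
  gam (Rq - 1)%nat * (rho_minus rec x0 h u l - rho_m) <= u l - rho_m.
Proof.
  rewrite rho_minus_last_node, <- point_value_average, <- quadrature_sub_r.
  apply (quadrature_term_le (fun nu => rho l nu - rho_m)); [|lia].
  intros nu Hnu. pose proof (point_value_bounds l nu Hnu). lra.
Qed.

Lemma conv_point_values_bounds l : rho_m <= conv rho l <= rho_M.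
Proof. apply conv_bounds, point_value_bounds. Qed.

Lemma conv_point_values_increment_le j :
  conv rho j - conv rho (j - 1) <= h * w 0 * (rho_M - u j).
Proof.
  rewrite <- point_value_average, <- quadrature_sub_l.
  apply conv_increment_le. intros l nu Hnu. apply point_value_bounds, Hnu.
Qed.

Lemma conv_point_values_decrement_le j :
  conv rho (j - 1) - conv rho j <= h * w 0 * (u j - rho_m).
Proof.
  rewrite <- point_value_average, <- quadrature_sub_r.
  apply conv_decrement_le. intros l nu Hnu. apply point_value_bounds, Hnu.
Qed.

End CellAverages.

Lemma w0_nonneg : 0 <= w 0.
Proof. apply Hw_nonneg. pose proof (pos_INR N). nra. Qed.

Lemma forward_euler_invariant u s : (forall l, rho_m <= u l <= rho_M) -> 0 <= s ->
  s * (gam (Rq - 1)%nat * h * w 0 * nv' * ng + nv * ng') <= gam (Rq - 1)%nat * h ->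
  forall j, rho_m <= u j + s * Lop rec x0 h N Rq y gam w v g u j <= rho_M.
Proof.
  intros Hu Hs HCFL j.
  pose proof (rho_minus_bounds u Hu j) as Ha. pose proof (rho_minus_bounds u Hu (j - 1)) as Hb.
  pose proof (conv_point_values_bounds u Hu j) as HA.
  pose proof (conv_point_values_bounds u Hu (j - 1)) as HB.
  unfold Lop.
  change (Vhalf rec x0 h N Rq y gam w v u) with (fun l => v (conv (rho_nu rec x0 h y u) l)).
  cbv beta.
  set (a := rho_minus rec x0 h u j) in *. set (b := rho_minus rec x0 h u (j - 1)) in *.
  set (A := conv (rho_nu rec x0 h y u) j) in *. set (B := conv (rho_nu rec x0 h y u) (j - 1)) in *.
  assert (HgR : 0 < gam (Rq - 1)%nat) by (apply Hgam; lia).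
  pose proof w0_nonneg as Hw0. pose proof (Hu j) as Huj.
  assert (Hrange : forall r, rho_m <= r <= rho_M -> 0 <= r <= rho_max) by (intros; lra).
  assert (Hd : forall r, 0 <= r -> 0 <= h * w 0 * r) by (intros; repeat apply Rmult_le_pos; lra).
  apply euler_update_bounds; [exact Hh | |].
  - refine (flux_difference_le s h _ (w 0) nv ng nv' ng' (u j - rho_m) (a - rho_m)
      (v A) (v B) (g a) (g b)
      HgR Hh Hs Hw0 Hnv' Hng' _ _ _ (rho_minus_gap_lower u Hu j) _ _ HCFL).
    + apply Hv_range, Hrange, HA.
    + apply Hg_range, Hrange, Hb.
    + lra.
    + apply Hg_increment; [apply Hrange, Hb | apply Hrange, Ha | lra | lra].
    + apply Hv_decrement; [apply Hrange, HA | apply Hrange, HB | apply Hd; lra |].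
      apply conv_point_values_decrement_le, Hu.
  - replace (- (s * (v A * g a - v B * g b))) with (s * (v B * g b - v A * g a)) by ring.
    refine (flux_difference_le s h _ (w 0) nv ng nv' ng' (rho_M - u j) (rho_M - a)
      (v B) (v A) (g b) (g a)
      HgR Hh Hs Hw0 Hnv' Hng' _ _ _ (rho_minus_gap_upper u Hu j) _ _ HCFL).
    + apply Hv_range, Hrange, HB.
    + apply Hg_range, Hrange, Ha.
    + lra.
    + apply Hg_increment; [apply Hrange, Ha | apply Hrange, Hb | lra | lra].
    + apply Hv_decrement; [apply Hrange, HB | apply Hrange, HA | apply Hd; lra |].
      apply conv_point_values_increment_le, Hu.
Qed.

End ForwardEuler.

Lemma SSP_history_invariant (L : (Z -> R) -> Z -> R) c tau U lo hi :
  0 <= tau -> SSP_history L c tau U -> (forall j, lo <= U O j <= hi) ->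
  (forall u, (forall l, lo <= u l <= hi) ->
     forall s, 0 <= s <= tau * (1 / c) -> forall j, lo <= u j + s * L u j <= hi) ->
  forall m j, lo <= U m j <= hi.
Proof.
  intros Htau HSSP H0 Heuler m. induction m as [m IH] using lt_wf_ind; intros j.
  destruct m as [|m]; [apply H0|].
  destruct (HSSP (S m) ltac:(lia)) as [K [idx [alpha [beta [Hk [Halpha ->]]]]]].
  apply sumR_convex_bounds; auto. intros k Hkk.
  destruct (Hk k Hkk) as [Hidx [Hal Hbe]]. split; auto.
  apply (Heuler (U (idx k))); [intros l; apply IH, Hidx|].
  split; [apply Rmult_le_pos|apply Rmult_le_compat_l]; lra.
Qed.

Lemma is_supnorm_bounds f a b n z : is_supnorm f a b n -> a <= z <= b -> - n <= f z <= n.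
Proof.
  intros [Hub _] Hz. assert (Habs : Rabs (f z) <= n) by (apply Hub; eauto).
  pose proof (Rle_abs (f z)). pose proof (Rle_abs (- f z)). rewrite Rabs_Ropp in *. lra.
Qed.

Lemma is_supnorm_nonneg f a b n : a <= b -> is_supnorm f a b n -> 0 <= n.
Proof. intros Hab Hn. pose proof (is_supnorm_bounds f a b n a Hn ltac:(lra)). lra. Qed.

Lemma is_supnorm_range f a b n : is_supnorm f a b n -> (forall z, a <= z <= b -> 0 <= f z) ->
  forall z, a <= z <= b -> 0 <= f z <= n.
Proof. intros Hn Hf z Hz. split; [auto | apply (is_supnorm_bounds f a b n z Hn Hz)]. Qed.

Lemma ssp_step_cfl s tau c X Y : 0 < c -> 0 <= X -> 0 <= s <= tau * (1 / c) ->
  tau * X <= c * Y -> s * X <= Y.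
Proof.
  intros Hc HX Hs HXY. apply Rle_trans with (tau * X / c).
  - replace (tau * X / c) with (tau * (1 / c) * X) by (field; lra).
    apply Rmult_le_compat_r; lra.
  - apply Rle_div_l; lra.
Qed.

Lemma range_bounds (f : R -> R) lo hi m M : (forall x, lo <= f x <= hi) ->
  is_glb (fun z => exists x, z = f x) m -> is_lub (fun z => exists x, z = f x) M ->
  lo <= m /\ M <= hi /\ forall x, m <= f x <= M.
Proof.
  intros Hf [Hm_lb Hm_glb] [HM_ub HM_lub].
  split; [apply Hm_glb; intros z [x ->]; apply Hf|].
  split; [apply HM_lub; intros z [x ->]; apply Hf|].
  intros x. split; [apply Hm_lb | apply HM_ub]; eauto.
Qed.

Theorem theorem3p2
  (* standing assumptions (A) *)
  (rho_max eta : R) (g g' v v' w w' : R -> R)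
  (Hrho_max : 0 < rho_max) (Heta : 0 < eta)
  (Hg : C1_on g g' 0 rho_max)
  (Hg0 : forall r, 0 <= r <= rho_max -> 0 <= g r)
  (Hg' : forall r, 0 <= r <= rho_max -> 0 <= g' r)
  (Hv : C1_on v v' 0 rho_max)
  (Hv0 : forall r, 0 <= r <= rho_max -> 0 <= v r)
  (Hv' : forall r, 0 <= r <= rho_max -> v' r <= 0)
  (Hw : C1_on w w' 0 eta)
  (Hw0 : forall s, 0 <= s <= eta -> 0 <= w s)
  (Hw' : forall s, 0 <= s <= eta -> w' s <= 0)
  (prw : Riemann_integrable w 0 eta) (Hwint : RiemannInt prw = 1)
  (* sup norms on [0, rho_max] *)
  (nv' ng nv ng' : R)
  (Hnv' : is_supnorm v' 0 rho_max nv') (Hng : is_supnorm g 0 rho_max ng)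
  (Hnv : is_supnorm v 0 rho_max nv) (Hng' : is_supnorm g' 0 rho_max ng')
  (* grid *)
  (h x0 : R) (N : nat) (Hh : 0 < h) (HN : INR N * h = eta)
  (* quadrature: nodes y_0..y_{Rq-1}, y_{Rq-1} = 1 *)
  (Rq : nat) (y gam : nat -> R) (HRq : (1 <= Rq)%nat)
  (Hy : forall nu, (nu < Rq)%nat -> 0 <= y nu <= 1)
  (HyR : y (Rq - 1)%nat = 1)
  (Hgam : forall nu, (nu < Rq)%nat -> 0 < gam nu)
  (Hgam1 : sumR Rq gam = 1)
  (Hwnorm : h * sumR N (fun k => sumR Rq (fun nu => gam nu * w ((INR k + y nu) * h))) = 1)
  (* initial data *)
  (rho0 : R -> R) (Hrho0 : forall x, 0 <= rho0 x <= rho_max)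
  (rho_m rho_M : R)
  (Hrm : is_glb (fun z => exists x, z = rho0 x) rho_m)
  (HrM : is_lub (fun z => exists x, z = rho0 x) rho_M)
  (* reconstruction with property (R) *)
  (rec : recon) (HR : property_R rec x0 h Rq y gam rho_m rho_M)
  (* SSP time integration *)
  (cSSP tau : R) (HcSSP : 0 < cSSP) (Htau : 0 < tau)
  (HCFL : tau * (gam (Rq - 1)%nat * h * w 0 * nv' * ng + nv * ng')
            <= cSSP * (gam (Rq - 1)%nat * h))
  (U : nat -> Z -> R)
  (HU0 : forall j, U 0%nat j = sumR Rq (fun nu => gam nu * rho0 (xl x0 h j + h * y nu)))
  (HSSP : SSP_history (Lop rec x0 h N Rq y gam w v g) cSSP tau U)
  (* position of the time levels t^n = n tau in the computation history *)
  (step : nat -> nat) (Hstep0 : step 0%nat = 0%nat) :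
  forall (n : nat) (j : Z), rho_m <= U (step n) j <= rho_M.
Proof.
  intros n j.
  destruct (range_bounds rho0 0 rho_max rho_m rho_M Hrho0 Hrm HrM) as [Hrm0 [HrMmax Hrho0_m_M]].
  assert (Hrho_max0 : 0 <= rho_max) by lra.
  pose proof (is_supnorm_nonneg _ _ _ _ Hrho_max0 Hnv'). pose proof (is_supnorm_nonneg _ _ _ _ Hrho_max0 Hng).
  pose proof (is_supnorm_nonneg _ _ _ _ Hrho_max0 Hnv). pose proof (is_supnorm_nonneg _ _ _ _ Hrho_max0 Hng').
  apply (SSP_history_invariant _ cSSP tau U rho_m rho_M (Rlt_le _ _ Htau) HSSP).
  { intros l. rewrite HU0. apply sumR_convex_bounds; auto.
    intros nu Hnu. split; [apply Rlt_le, Hgam, Hnu | apply Hrho0_m_M]. }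
  intros u Hu s Hs.
  apply (forward_euler_invariant rec x0 h N Rq y gam w v g rho_max rho_m rho_M ng ng' nv nv');
    auto; try rewrite HN; try lra.
  - exact Hw0.
  - intros s1 s2 Hs1 Hs12 Hs2.
    pose proof (C1_on_increment_le w w' 0 eta 0 s1 s2 Hw Hw' Hs1 Hs12 Hs2). lra.
  - exact (is_supnorm_range g 0 rho_max ng Hng Hg0).
  - intros a b d. apply (C1_on_monotone_increment_le g g' 0 rho_max ng' a b d Hg).
    exact (is_supnorm_range g' 0 rho_max ng' Hng' Hg').
  - exact (is_supnorm_range v 0 rho_max nv Hnv Hv0).
  - intros a b d. apply (C1_on_antitone_decrement_le v v' 0 rho_max nv' a b d Hv).
    intros z Hz. pose proof (is_supnorm_bounds v' 0 rho_max nv' z Hnv' Hz). pose proof (Hv' z Hz).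
    lra.
  - apply (ssp_step_cfl s tau cSSP); auto.
    assert (0 < gam (Rq - 1)%nat) by (apply Hgam; lia). pose proof (Hw0 0 ltac:(lra)).
    assert (0 <= gam (Rq - 1)%nat * h * w 0 * nv' * ng) by (repeat apply Rmult_le_pos; lra).
    assert (0 <= nv * ng') by (apply Rmult_le_pos; lra). lra.
Qed.
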